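(* The retract variety $\mathbf V(\underline 2,\underline 3)$ is not principal: there is no monounary algebra $A$ with $\mathbf V(A)=\mathbf V(\underline 2,\underline 3)$.
   Context: A monounary algebra is a pair $(A,f)$ with $A$ a nonempty set and $f:A\to A$; direct products are formed coordinatewise. A retract of $A$ is a nonempty subalgebra $M$ such that there is an endomorphism $h:A\to M$ with $h(x)=x$ for all $x\in M$. A retract variety is a class of algebras closed under isomorphisms, retracts and direct products (of set-indexed families); $\mathbf V(\mathcal K)$ denotes the smallest retract variety containing $\mathcal K$, and $\mathbf V(A_1,\dots,A_n)=\mathbf V(\{A_1,\dots,A_n\})$. For $n\in\mathbb N$, $\underline n=(\mathbb Z_n,f)$ with $f(k)=k+1 \pmod n$ (an $n$-element cycle). *)

From mathcomp Require Import all_boot.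
Set Implicit Arguments. Unset Strict Implicit. Unset Printing Implicit Defensive.

Record Alg := MkAlg {
  carrier :> Type;
  op : carrier -> carrier;
  alg_nonempty : inhabited carrier }.

Definition hom (A B : Alg) (h : A -> B) : Prop :=
  forall x, h (@op A x) = @op B (h x).

Definition iso (A B : Alg) : Prop :=
  exists h : A -> B, hom h /\ bijective h.

Definition op_closed (A : Alg) (S : A -> Prop) : Prop :=
  forall x, S x -> S (@op A x).

Definition subalg (A : Alg) (S : A -> Prop) (HS : op_closed S)
  (Hne : inhabited {x : A | S x}) : Alg :=
  {| carrier := {x : A | S x};
     op := fun x => exist S (@op A (proj1_sig x)) (HS _ (proj2_sig x));
     alg_nonempty := Hne |}.

Definition is_retract (A : Alg) (S : A -> Prop) : Prop :=
  exists h : A -> A, [/\ hom h, (forall x, S (h x)) & (forall x, S x -> h x = x)].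

Definition prodalg (I : Type) (F : I -> Alg)
  (Hne : inhabited (forall i, F i)) : Alg :=
  {| carrier := forall i, F i;
     op := fun x i => @op (F i) (x i);
     alg_nonempty := Hne |}.

Definition retract_variety (C : Alg -> Prop) : Prop :=
  [/\ (forall A B, C A -> iso A B -> C B),
      (forall (A : Alg) (S : A -> Prop) (HS : op_closed S)
              (Hne : inhabited {x : A | S x}),
          C A -> is_retract S -> C (subalg HS Hne))
    & (forall (I : Type) (F : I -> Alg) (Hne : inhabited (forall i, F i)),
          (forall i, C (F i)) -> C (prodalg Hne))].

Definition V (K : Alg -> Prop) : Alg -> Prop :=
  fun A => forall C, retract_variety C -> (forall B, K B -> C B) -> C A.

(* the n-element cycle (Z_n, k |-> k+1 mod n), meaningful for n >= 1 *)
Definition cycle_alg (n : nat) : Alg :=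
  {| carrier := 'I_(n.-1).+1;
     op := fun k => ordS k;
     alg_nonempty := inhabits ord0 |}.

From mathcomp Require Import all_boot.
From Stdlib Require Import ProofIrrelevance FunctionalExtensionality ClassicalEpsilon.

(* For each n, both "some point has period dividing n" and "every point of
   period dividing n is fixed" are preserved by isomorphisms, retracts and
   products, so each cuts out a retract variety.  A generator A of
   V(2, 3) either has a point with x'' = x, and then so would 3, or it has
   none, and then it vacuously satisfies the second property with n = 2,
   which 2 violates. *)

Definition has_periodic_point (n : nat) (A : Alg) : Prop :=
  exists x : A, iter n (@op _) x = x.

Definition periodic_points_fixed (n : nat) (A : Alg) : Prop :=
  forall x : A, iter n (@op _) x = x -> op x = x.

Lemma hom_iter (A B : Alg) (h : A -> B) (n : nat) (x : A) :
  hom h -> h (iter n (@op _) x) = iter n (@op _) (h x).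
Proof. by move=> hh; elim: n => //= n IHn; rewrite hh IHn. Qed.

Lemma subalg_iter (A : Alg) (S : A -> Prop) (HS : op_closed S)
    (Hne : inhabited {x : A | S x}) (n : nat) (x : subalg HS Hne) :
  proj1_sig (iter n (@op _) x) = iter n (@op _) (proj1_sig x).
Proof. by elim: n => //= n ->. Qed.

Lemma prodalg_iter (I : Type) (F : I -> Alg) (Hne : inhabited (forall i, F i))
    (n : nat) (x : prodalg Hne) (i : I) :
  iter n (@op _) x i = iter n (@op _) (x i).
Proof. by elim: n => //= n ->. Qed.

Lemma subalg_eq (A : Alg) (S : A -> Prop) (HS : op_closed S)
    (Hne : inhabited {x : A | S x}) (x y : subalg HS Hne) :
  proj1_sig x = proj1_sig y -> x = y.
Proof. exact: (@eq_sig_hprop A S (fun a => proof_irrelevance (S a)) x y). Qed.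

Lemma retract_variety_has_periodic_point (n : nat) :
  retract_variety (has_periodic_point n).
Proof.
split.
- move=> A B [x Hx] [h [hh _]]; exists (h x).
  by rewrite -hom_iter // Hx.
- move=> A S HS Hne [x Hx] [h [hh hS _]].
  exists (exist S (h x) (hS x)); apply: subalg_eq.
  by rewrite subalg_iter /= -hom_iter // Hx.
- move=> I F Hne HF.
  have [x Hx] : exists x : forall i, F i, forall i, iter n (@op _) (x i) = x i.
    by exists (fun i => proj1_sig (constructive_indefinite_description _ (HF i)))
      => i; exact: proj2_sig (constructive_indefinite_description _ (HF i)).
  exists (x : prodalg Hne); apply: functional_extensionality_dep => i.
  by rewrite prodalg_iter Hx.
Qed.

Lemma retract_variety_periodic_points_fixed (n : nat) :
  retract_variety (periodic_points_fixed n).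
Proof.
split.
- move=> A B HA [h [hh [g hK gK]]] y Hy.
  have Hgy : iter n (@op _) (g y) = g y.
    by apply: (can_inj hK); rewrite hom_iter // gK Hy.
  by rewrite -[y]gK -hh HA.
- move=> A S HS Hne HA _ x Hx; apply: subalg_eq.
  by apply: HA; rewrite -subalg_iter Hx.
- move=> I F Hne HF x Hx; apply: functional_extensionality_dep => i.
  by apply: HF; rewrite -prodalg_iter Hx.
Qed.

Lemma V_gen (K : Alg -> Prop) (A : Alg) : K A -> V K A.
Proof. by move=> KA C _; apply. Qed.

Lemma cycle3_no_point_of_period2 : ~ has_periodic_point 2 (cycle_alg 3).
Proof. by move=> [[[|[|[|m]]] Hm]] //= /(f_equal val). Qed.

Lemma cycle2_has_unfixed_point_of_period2 :
  ~ periodic_points_fixed 2 (cycle_alg 2).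
Proof.
move=> H.
have E : iter 2 (@op _) (ord0 : cycle_alg 2) = ord0 by apply: val_inj.
by move: (H _ E) => /(f_equal val).
Qed.

Theorem proposition2p1 :
  ~ exists A : Alg,
      forall B : Alg,
        V (fun X => X = A) B <->
        V (fun X => X = cycle_alg 2 \/ X = cycle_alg 3) B.
Proof.
move=> [A HA].
have V2 : V (fun X => X = A) (cycle_alg 2) by apply/HA; apply: V_gen; left.
have V3 : V (fun X => X = A) (cycle_alg 3) by apply/HA; apply: V_gen; right.
have noE : ~ has_periodic_point 2 A.
  move=> HE; apply: cycle3_no_point_of_period2.
  by apply: V3 (retract_variety_has_periodic_point 2) _ => B ->.
apply: cycle2_has_unfixed_point_of_period2.
apply: V2 (retract_variety_periodic_points_fixed 2) _ => B -> x Hx.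
by case: noE; exists x.
Qed.
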